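(* Let $(\mathcal{C},\mathbb{E},\mathfrak{s})$ be an extriangulated category with enough injective objects and enough projective morphisms, and let $\mathbb{F}\subseteq\mathbb{E}$ be an additive subfunctor having enough injective morphisms. Then: (1) the pair $\big({}^{\perp_{\mathbb{E}}}(\mathbb{F}\text{-}\mathrm{inj}),\ ({}^{\perp_{\mathbb{E}}}(\mathbb{F}\text{-}\mathrm{inj}))^{\perp_{\mathbb{E}}}\big)$ is a complete $\mathbb{E}$-cotorsion pair of ideals; (2) $\mathrm{Ph}(\mathbb{F})^{\perp_{\mathbb{E}}}=\mathrm{Ph}(\mathbb{F})^\star\text{-}\mathrm{inj}$, and $\mathrm{Ph}(\mathbb{F})^{\perp_{\mathbb{E}}}$ is the minimal ideal containing $\mathbb{F}\text{-}\mathrm{inj}$ and satisfying property (C), i.e. it contains $\mathbb{F}\text{-}\mathrm{inj}$, satisfies (C), and is contained in every ideal that contains $\mathbb{F}\text{-}\mathrm{inj}$ and satisfies (C); (3) $\mathrm{Ph}(\mathbb{F})^\star$ is the maximal additive subfunctor of $\mathbb{F}$ having enough special injective morphisms, i.e. $\mathrm{Ph}(\mathbb{F})^\star\subseteq\mathbb{F}$, it has enough special injective morphisms, and it contains every additive subfunctor $\mathbb{F}'\subseteq\mathbb{F}$ having enough special injective morphisms.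
   Context: An extriangulated category $(\mathcal{C},\mathbb{E},\mathfrak{s})$ (Nakaoka–Palu): additive $\mathcal{C}$, biadditive $\mathbb{E}:\mathcal{C}^{\mathrm{op}}\times\mathcal{C}\to\mathrm{Ab}$, additive realization $\mathfrak{s}$ assigning to each $\delta\in\mathbb{E}(C,A)$ an equivalence class of sequences $A\to B\to C$, forming $\mathbb{E}$-triangles $A\to B\to C\overset{\delta}{\dashrightarrow}$, satisfying (ET1)–(ET4), (ET3)$^{\mathrm{op}}$, (ET4)$^{\mathrm{op}}$. Notation $a_\star\delta=\mathbb{E}(C,a)(\delta)$, $c^\star\delta=\mathbb{E}(c,A)(\delta)$; a morphism of $\mathbb{E}$-triangles is a commuting triple $(a,b,c)$ with $a_\star\delta=c^\star\delta'$. Injective object $E$: $\mathbb{E}(C,E)=0$ for all $C$; enough injective objects: every $A$ admits an $\mathbb{E}$-triangle $A\to E\to C\overset{\delta}{\dashrightarrow}$ with $E$ injective. Enough projective morphisms: every $C$ admits an $\mathbb{E}$-triangle $K\to P\xrightarrow{p}C\overset{\gamma}{\dashrightarrow}$ with $p^\star\delta=0$ for all $\delta\in\mathbb{E}(C,A)$. Ideal: class of morphisms with zeros, closed under sums and two-sided composition. Additive subfunctor $\mathbb{F}$: subgroups $\mathbb{F}(C,A)\subseteq\mathbb{E}(C,A)$ stable under $a_\star,c^\star$; $\mathbb{F}$-triangles have extension in $\mathbb{F}$. $\mathrm{Ph}(\mathbb{F})$: morphisms $\varphi:X\to C$ with $\varphi^\star\delta\in\mathbb{F}(X,A)$ for all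 $\delta\in\mathbb{E}(C,A)$. $\mathbb{F}\text{-}\mathrm{inj}$: $i:A\to Y$ with $i_\star\delta=0$ for all $\delta\in\mathbb{F}(C,A)$. For an ideal $\mathcal{I}$, $\mathcal{I}^\star(X,A)=\{i^\star\delta\mid i\in\mathcal{I}(X,C),\delta\in\mathbb{E}(C,A)\}$. $\mathbb{F}$ has enough injective morphisms: every $A$ admits an $\mathbb{F}$-triangle $A\xrightarrow{e}B\to C\overset{\delta}{\dashrightarrow}$ with $e\in\mathbb{F}\text{-}\mathrm{inj}$; enough special injective morphisms: moreover there is an $\mathbb{E}$-triangle $A\to B'\to C'\overset{\delta'}{\dashrightarrow}$ and a morphism $(\mathrm{id}_A,b,\varphi)$ from the former to it with $\varphi\in\mathrm{Ph}(\mathbb{F})$. $\mathcal{M}^{\perp_{\mathbb{E}}}=\{g:A\to Y\mid m^\star g_\star\delta=0\ \forall m\in\mathcal{M},\,m:X\to C,\ \forall\delta\in\mathbb{E}(C,A)\}$; ${}^{\perp_{\mathbb{E}}}\mathcal{M}=\{g:X\to C\mid g^\star m_\star\delta=0\ \forall m\in\mathcal{M},\,m:A\to Y,\ \forall\delta\in\mathbb{E}(C,A)\}$. $\mathbb{E}$-cotorsion pair: $\mathcal{I}={}^{\perp_{\mathbb{E}}}\mathcal{J}$, $\mathcal{J}=\mathcal{I}^{\perp_{\mathbb{E}}}$; complete if $\mathcal{I}$ is special precovering (each $C$ has $i:X\to C$ in $\mathcal{I}$ with a morphism $(j,b,\mathrm{id}_C)$ of $\mathbb{E}$-triangles from some $A\to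 B\to C\overset{\delta}{\dashrightarrow}$ to some $A'\to X\xrightarrow{i}C\overset{\delta'}{\dashrightarrow}$, $j\in\mathcal{I}^{\perp_{\mathbb{E}}}$) and $\mathcal{J}$ is special preenveloping (each $A$ has $e:A\to X$ in $\mathcal{J}$ with a morphism $(\mathrm{id}_A,b,j)$ from some $A\xrightarrow{e}X\to Y\overset{\delta}{\dashrightarrow}$ to some $A\to B\to C\overset{\delta'}{\dashrightarrow}$, $j\in{}^{\perp_{\mathbb{E}}}\mathcal{J}$). Property (C) of an ideal $\mathcal{K}$: for every morphism of $\mathbb{E}$-triangles $(f,g,h)$ from $A\to B\to E\overset{\gamma}{\dashrightarrow}$ to $X\to Y\to Z\overset{\delta}{\dashrightarrow}$ with $f\in\mathcal{K}$ and $E$ injective, one has $g\in\mathcal{K}$. *)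

From HB Require Import structures.
From mathcomp Require Import all_boot all_algebra.
Set Implicit Arguments. Unset Strict Implicit. Unset Printing Implicit Defensive.
Import GRing.Theory.
Local Open Scope ring_scope.

Record PreAddCat := {
  Obj :> Type;
  Hom : Obj -> Obj -> zmodType;
  comp : forall A B C : Obj, Hom B C -> Hom A B -> Hom A C;
  idm : forall A : Obj, Hom A A;
  comp_assoc : forall (A B C D : Obj) (h : Hom C D) (g : Hom B C) (f : Hom A B),
      comp h (comp g f) = comp (comp h g) f;
  comp_idl : forall (A B : Obj) (f : Hom A B), comp (idm B) f = f;
  comp_idr : forall (A B : Obj) (f : Hom A B), comp f (idm A) = f;
  comp_addl : forall (A B C : Obj) (g1 g2 : Hom B C) (f : Hom A B),
      comp (g1 + g2) f = comp g1 f + comp g2 f;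
  comp_addr : forall (A B C : Obj) (g : Hom B C) (f1 f2 : Hom A B),
      comp g (f1 + f2) = comp g f1 + comp g f2
}.
Arguments Hom {p}.
Arguments comp {p A B C}.
Arguments idm {p}.

Section PreAdd.
Variable C : PreAddCat.

Definition is_iso (A B : C) (f : Hom A B) : Prop :=
  exists g : Hom B A, comp g f = idm A /\ comp f g = idm B.

Definition is_zero_object (Z : C) : Prop := idm Z = 0.

Definition is_biproduct (A B S : C) (i1 : Hom A S) (i2 : Hom B S)
    (p1 : Hom S A) (p2 : Hom S B) : Prop :=
  [/\ comp p1 i1 = idm A, comp p2 i2 = idm B, comp p2 i1 = 0, comp p1 i2 = 0
    & comp i1 p1 + comp i2 p2 = idm S].

Definition additive_cat : Prop :=
  (exists Z : C, is_zero_object Z) /\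
  forall A B : C, exists (S : C) (i1 : Hom A S) (i2 : Hom B S)
    (p1 : Hom S A) (p2 : Hom S B), is_biproduct i1 i2 p1 p2.
End PreAdd.

(* (ET1): biadditive functor E : C^op x C -> Ab.  Ext C A = E(C,A).    *)
Record ExtFun (C : PreAddCat) := {
  Ext : C -> C -> zmodType;
  pull : forall (C' C0 A : C), Hom C' C0 -> Ext C0 A -> Ext C' A;
  push : forall (C0 A A' : C), Hom A A' -> Ext C0 A -> Ext C0 A';
  pull_add : forall C' C0 A (c : Hom C' C0) (d1 d2 : Ext C0 A),
      pull c (d1 + d2) = pull c d1 + pull c d2;
  push_add : forall C0 A A' (a : Hom A A') (d1 d2 : Ext C0 A),
      push a (d1 + d2) = push a d1 + push a d2;
  pull_addm : forall C' C0 A (c1 c2 : Hom C' C0) (d : Ext C0 A),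
      pull (c1 + c2) d = pull c1 d + pull c2 d;
  push_addm : forall C0 A A' (a1 a2 : Hom A A') (d : Ext C0 A),
      push (a1 + a2) d = push a1 d + push a2 d;
  pull_id : forall C0 A (d : Ext C0 A), pull (idm C0) d = d;
  push_id : forall C0 A (d : Ext C0 A), push (idm A) d = d;
  pull_comp : forall C'' C' C0 A (c : Hom C' C0) (c' : Hom C'' C') (d : Ext C0 A),
      pull (comp c c') d = pull c' (pull c d);
  push_comp : forall C0 A A' A'' (a : Hom A A') (a' : Hom A' A'') (d : Ext C0 A),
      push (comp a' a) d = push a' (push a d);
  push_pull : forall C' C0 A A' (a : Hom A A') (c : Hom C' C0) (d : Ext C0 A),
      push a (pull c d) = pull c (push a d)
}.
Arguments Ext {C}.
Arguments pull {C e C' C0 A}.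
Arguments push {C e C0 A A'}.

(* real d x y  <->  A -x-> B -y-> C is in the class s(d), d in E(C,A)  *)
Section ETaxioms.
Variables (C : PreAddCat) (E : ExtFun C).
Variable real : forall A B C0 : C, Ext E C0 A -> Hom A B -> Hom B C0 -> Prop.
Arguments real {A B C0}.

Definition equiv_seq (A B B' C0 : C) (x : Hom A B) (y : Hom B C0)
    (x' : Hom A B') (y' : Hom B' C0) : Prop :=
  exists b : Hom B B', is_iso b /\ comp b x = x' /\ comp y' b = y.

Definition real_is_class : Prop :=
  forall (A C0 : C) (d : Ext E C0 A),
    (exists (B : C) (x : Hom A B) (y : Hom B C0), real d x y) /\
    (forall (B B' : C) (x : Hom A B) (y : Hom B C0) (x' : Hom A B') (y' : Hom B' C0),
        real d x y -> (real d x' y' <-> equiv_seq x y x' y')).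

Definition tri_mor (A B C0 A' B' C' : C) (d : Ext E C0 A) (x : Hom A B) (y : Hom B C0)
    (d' : Ext E C' A') (x' : Hom A' B') (y' : Hom B' C')
    (a : Hom A A') (b : Hom B B') (c : Hom C0 C') : Prop :=
  comp b x = comp x' a /\ comp c y = comp y' b /\ push a d = pull c d'.

Definition real_lifts : Prop :=
  forall (A B C0 A' B' C' : C) (d : Ext E C0 A) (x : Hom A B) (y : Hom B C0)
    (d' : Ext E C' A') (x' : Hom A' B') (y' : Hom B' C') (a : Hom A A') (c : Hom C0 C'),
    real d x y -> real d' x' y' -> push a d = pull c d' ->
    exists b : Hom B B', comp b x = comp x' a /\ comp c y = comp y' b.

Definition real_zero : Prop :=
  forall (A C0 S : C) (i1 : Hom A S) (i2 : Hom C0 S) (p1 : Hom S A) (p2 : Hom S C0),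
    is_biproduct i1 i2 p1 p2 -> real (0 : Ext E C0 A) i1 p2.

Definition real_sum : Prop :=
  forall (A B C0 A' B' C' : C) (d : Ext E C0 A) (x : Hom A B) (y : Hom B C0)
    (d' : Ext E C' A') (x' : Hom A' B') (y' : Hom B' C')
    (SA SB SC : C)
    (ia : Hom A SA) (ia' : Hom A' SA) (pa : Hom SA A) (pa' : Hom SA A')
    (ib : Hom B SB) (ib' : Hom B' SB) (pb : Hom SB B) (pb' : Hom SB B')
    (ic : Hom C0 SC) (ic' : Hom C' SC) (pc : Hom SC C0) (pc' : Hom SC C'),
    is_biproduct ia ia' pa pa' -> is_biproduct ib ib' pb pb' ->
    is_biproduct ic ic' pc pc' ->
    real d x y -> real d' x' y' ->
    real (push ia (pull pc d) + push ia' (pull pc' d'))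
         (comp ib (comp x pa) + comp ib' (comp x' pa'))
         (comp ic (comp y pb) + comp ic' (comp y' pb')).

Definition ET3 : Prop :=
  forall (A B C0 A' B' C' : C) (d : Ext E C0 A) (x : Hom A B) (y : Hom B C0)
    (d' : Ext E C' A') (x' : Hom A' B') (y' : Hom B' C') (a : Hom A A') (b : Hom B B'),
    real d x y -> real d' x' y' -> comp b x = comp x' a ->
    exists c : Hom C0 C', comp c y = comp y' b /\ push a d = pull c d'.

Definition ET3op : Prop :=
  forall (A B C0 A' B' C' : C) (d : Ext E C0 A) (x : Hom A B) (y : Hom B C0)
    (d' : Ext E C' A') (x' : Hom A' B') (y' : Hom B' C') (b : Hom B B') (c : Hom C0 C'),
    real d x y -> real d' x' y' -> comp c y = comp y' b ->
    exists a : Hom A A', comp b x = comp x' a /\ push a d = pull c d'.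

Definition ET4 : Prop :=
  forall (A B C0 D F : C) (f : Hom A B) (f' : Hom B D) (g : Hom B C0) (g' : Hom C0 F)
    (d : Ext E D A) (d' : Ext E F B),
    real d f f' -> real d' g g' ->
    exists (E0 : C) (h' : Hom C0 E0) (dd : Hom D E0) (e : Hom E0 F) (d'' : Ext E E0 A),
      real d'' (comp g f) h' /\ comp dd f' = comp h' g /\ comp e h' = g' /\
      real (push f' d') dd e /\ pull dd d'' = d /\ push f d'' = pull e d'.

Definition ET4op : Prop :=
  forall (A B C0 D F : C) (f' : Hom D A) (f : Hom A B) (g' : Hom F B) (g : Hom B C0)
    (d : Ext E B D) (d' : Ext E C0 F),
    real d f' f -> real d' g' g ->
    exists (E0 : C) (h' : Hom E0 A) (dd : Hom D E0) (e : Hom E0 F) (d'' : Ext E C0 E0),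
      real d'' h' (comp g f) /\ comp h' dd = f' /\ comp f h' = comp g' e /\
      real (pull g' d) dd e /\ push e d'' = d' /\ push dd d = pull g d''.

End ETaxioms.

Record ExtriCat := {
  ecat :> PreAddCat;
  eE : ExtFun ecat;
  ereal : forall A B C0 : ecat, Ext eE C0 A -> Hom A B -> Hom B C0 -> Prop;
  e_additive : additive_cat ecat;
  e_class : real_is_class ereal;
  e_lifts : real_lifts ereal;
  e_zero : real_zero ereal;
  e_sum : real_sum ereal;
  e_ET3 : ET3 ereal;
  e_ET3op : ET3op ereal;
  e_ET4 : ET4 ereal;
  e_ET4op : ET4op ereal
}.
Arguments ereal {e A B C0}.

Unset Implicit Arguments.
Section Paper.
Variable X : ExtriCat.
Local Notation E := (Ext (eE X)).
Local Notation real := (@ereal X).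

Definition Mor := forall A B : X, Hom A B -> Prop.
Definition SubF := forall C A : X, E C A -> Prop.

Definition mor_sub (M N : Mor) : Prop := forall A B (f : Hom A B), M A B f -> N A B f.
Definition mor_eq (M N : Mor) : Prop := forall A B (f : Hom A B), M A B f <-> N A B f.
Definition subF_sub (F G : SubF) : Prop := forall C A (d : E C A), F C A d -> G C A d.

Definition is_ideal (I : Mor) : Prop :=
  [/\ forall A B : X, I A B 0,
      forall A B (f g : Hom A B), I A B f -> I A B g -> I A B (f + g)
    & forall (A B C D : X) (u : Hom C D) (f : Hom B C) (v : Hom A B),
        I B C f -> I A D (comp u (comp f v))].

Definition additive_subfunctor (F : SubF) : Prop :=
  [/\ forall C A : X, F C A 0,
      forall C A (d1 d2 : E C A), F C A d1 -> F C A d2 -> F C A (d1 + d2),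
      forall C A (d : E C A), F C A d -> F C A (- d),
      forall C A A' (a : Hom A A') (d : E C A), F C A d -> F C A' (push a d)
    & forall C' C A (c : Hom C' C) (d : E C A), F C A d -> F C' A (pull c d)].

Definition injective_object (I : X) : Prop := forall (C : X) (d : E C I), d = 0.

Definition enough_injective_objects : Prop :=
  forall A : X, exists (I C : X) (x : Hom A I) (y : Hom I C) (d : E C A),
    real d x y /\ injective_object I.

Definition enough_projective_morphisms : Prop :=
  forall C : X, exists (K P : X) (x : Hom K P) (p : Hom P C) (g : E C K),
    real g x p /\ forall (A : X) (d : E C A), pull p d = 0.

Definition Ph (F : SubF) : Mor :=
  fun Y C phi => forall (A : X) (d : E C A), F Y A (pull phi d).

Definition inj (F : SubF) : Mor :=
  fun A Y i => forall (C : X) (d : E C A), F C A d -> push i d = 0.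

Definition star (I : Mor) : SubF :=
  fun Y A e => exists (C : X) (i : Hom Y C) (d : E C A), I Y C i /\ e = pull i d.

Definition enough_inj_mor (F : SubF) : Prop :=
  forall A : X, exists (B C : X) (e : Hom A B) (y : Hom B C) (d : E C A),
    [/\ real d e y, F C A d & inj F A B e].

Definition enough_special_inj_mor (F : SubF) : Prop :=
  forall A : X, exists (B C : X) (e : Hom A B) (y : Hom B C) (d : E C A),
    [/\ real d e y, F C A d, inj F A B e &
      exists (B' C' : X) (x' : Hom A B') (y' : Hom B' C') (d' : E C' A)
        (b : Hom B B') (phi : Hom C C'),
        [/\ real d' x' y', tri_mor d e y d' x' y' (idm A) b phi & Ph F C C' phi]].

Definition perp_right (M : Mor) : Mor :=
  fun A Y g => forall (Z C : X) (m : Hom Z C), M Z C m ->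
    forall d : E C A, pull m (push g d) = 0.

Definition perp_left (M : Mor) : Mor :=
  fun Z C g => forall (A Y : X) (m : Hom A Y), M A Y m ->
    forall d : E C A, pull g (push m d) = 0.

Definition cotorsion_pair (I J : Mor) : Prop :=
  [/\ is_ideal I, is_ideal J, mor_eq I (perp_left J) & mor_eq J (perp_right I)].

Definition special_precovering (I : Mor) : Prop :=
  forall C : X, exists (Y : X) (i : Hom Y C), I Y C i /\
    exists (A B A' : X) (x : Hom A B) (y : Hom B C) (d : E C A)
      (x' : Hom A' Y) (d' : E C A') (j : Hom A A') (b : Hom B Y),
      [/\ real d x y, real d' x' i, tri_mor d x y d' x' i j b (idm C)
        & perp_right I A A' j].

Definition special_preenveloping (J : Mor) : Prop :=
  forall A : X, exists (Y : X) (e : Hom A Y), J A Y e /\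
    exists (Z B C : X) (y : Hom Y Z) (d : E Z A)
      (x' : Hom A B) (y' : Hom B C) (d' : E C A) (b : Hom Y B) (j : Hom Z C),
      [/\ real d e y, real d' x' y', tri_mor d e y d' x' y' (idm A) b j
        & perp_left J Z C j].

Definition complete_cotorsion_pair (I J : Mor) : Prop :=
  [/\ cotorsion_pair I J, special_precovering I & special_preenveloping J].

Definition property_C (K : Mor) : Prop :=
  forall (A B I Y Z W : X) (x : Hom A B) (y : Hom B I) (g0 : E I A)
    (x' : Hom Y Z) (y' : Hom Z W) (d : E W Y)
    (f : Hom A Y) (g : Hom B Z) (h : Hom I W),
    real g0 x y -> real d x' y' -> tri_mor g0 x y d x' y' f g h ->
    injective_object I -> K A Y f -> K B Z g.

End Paper.

Arguments mor_sub {X}. Arguments mor_eq {X}. Arguments subF_sub {X}.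
Arguments is_ideal {X}. Arguments additive_subfunctor {X}.
Arguments Ph {X}. Arguments inj {X}. Arguments star {X}.
Arguments enough_inj_mor {X}. Arguments enough_special_inj_mor {X}.
Arguments perp_right {X}. Arguments perp_left {X}.
Arguments cotorsion_pair {X}. Arguments special_precovering {X}.
Arguments special_preenveloping {X}. Arguments complete_cotorsion_pair {X}.
Arguments property_C {X}.

(** For an object [J], push the
    extension of a projective-morphism resolution [K -> P -> J] along an
    [F]-injective inflation [K -> B] and realize it as [B -> M -phi-> J];
    then [phi] is phantom and every phantom morphism into [J] factors
    through it, because its pullback kills the pushed extension.  Pulling an
    injective coresolution [A -> I -> J] back along [phi] gives an
    E-triangle [A -e-> B' -> M] with [e] in [Ph(F)^perp]; these triangles
    provide the completeness of the cotorsion pair and the special injective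
    morphisms of [Ph(F)^*].  A subfunctor [F'] with enough special injective
    morphisms is generated by pullbacks along its own phantoms, whence
    maximality.  For minimality, [g] in [Ph(F)^perp] satisfies
    [g_* gamma = h_* gamma_P] with [h] factoring through an [F]-injective,
    so [g] is a morphism through [I] plus a morphism through the middle term
    of [q^* gamma_P]; property (C) puts both in any ideal containing
    [F-inj]. *)
From Pilot Require Import Defs.
From mathcomp Require Import all_boot all_algebra.
Set Implicit Arguments. Unset Strict Implicit.
Import GRing.Theory.
Local Open Scope ring_scope.
Local Notation Hom := Defs.Hom.
Local Notation comp := Defs.comp.

Lemma additive_map0 (U V : zmodType) (f : U -> V) :
  {morph f : u v / u + v} -> f 0 = 0.
Proof. by move=> fD; apply: (@addrI _ (f 0)); rewrite -fD !addr0. Qed.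

Lemma additive_mapN (U V : zmodType) (f : U -> V) :
  {morph f : u v / u + v} -> {morph f : u / - u}.
Proof. by move=> fD u; apply/eqP; rewrite -addr_eq0 -fD addNr (additive_map0 fD). Qed.

Section ExtriangulatedFacts.
Variable X : ExtriCat.
Local Notation E := (Ext (eE X)).
Local Notation real := (@ereal X).

Lemma comp0l (A B C : X) (f : Hom A B) : comp (0 : Hom B C) f = 0.
Proof. exact: (additive_map0 (f := comp^~ f) (fun g1 g2 => comp_addl g1 g2 f)). Qed.

Lemma comp0r (A B C : X) (g : Hom B C) : comp g (0 : Hom A B) = 0.
Proof. exact: (additive_map0 (comp_addr g)). Qed.

Lemma pull0 (C' C A : X) (c : Hom C' C) : pull c (0 : E C A) = 0.
Proof. exact: (additive_map0 (pull_add c)). Qed.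

Lemma push0 (C A A' : X) (a : Hom A A') : push a (0 : E C A) = 0.
Proof. exact: (additive_map0 (push_add a)). Qed.

Lemma pull0m (C' C A : X) (d : E C A) : pull (0 : Hom C' C) d = 0.
Proof. exact: (additive_map0 (f := pull^~ d) (fun c1 c2 => pull_addm c1 c2 d)). Qed.

Lemma push0m (C A A' : X) (d : E C A) : push (0 : Hom A A') d = 0.
Proof. exact: (additive_map0 (f := push^~ d) (fun a1 a2 => push_addm a1 a2 d)). Qed.

Lemma pullN (C' C A : X) (c : Hom C' C) (d : E C A) : pull c (- d) = - pull c d.
Proof. exact: (additive_mapN (pull_add c)). Qed.

Lemma pushNm (C A A' : X) (a : Hom A A') (d : E C A) : push (- a) d = - push a d.
Proof. exact: (additive_mapN (f := push^~ d) (fun a1 a2 => push_addm a1 a2 d)). Qed.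

Lemma exists_zero_object : exists Z : X, is_zero_object Z.
Proof. by case: (e_additive X). Qed.

Lemma exists_biproduct (A B : X) : exists (S : X) (i1 : Hom A S) (i2 : Hom B S)
    (p1 : Hom S A) (p2 : Hom S B), is_biproduct i1 i2 p1 p2.
Proof. by case: (e_additive X) => _ /(_ A B). Qed.

Lemma exists_real (C A : X) (d : E C A) :
  exists (B : X) (x : Hom A B) (y : Hom B C), real d x y.
Proof. by case: (e_class d). Qed.

Lemma real_id_zero (Z A : X) : is_zero_object Z -> real (0 : E Z A) (idm A) 0.
Proof.
move=> Z0; apply: (@e_zero X A Z A (idm A) 0 (idm A) 0).
by split; rewrite ?comp_idl ?comp0l ?comp0r ?Z0 ?addr0.
Qed.

Lemma real_zero_id (Z I : X) : is_zero_object Z -> real (0 : E I Z) 0 (idm I).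
Proof.
move=> Z0; apply: (@e_zero X Z I I 0 (idm I) 0 (idm I)).
by split; rewrite ?comp_idl ?comp0l ?comp0r ?Z0 ?add0r.
Qed.

Lemma push_inflation0 (A B C : X) (d : E C A) (x : Hom A B) (y : Hom B C) :
  real d x y -> push x d = 0.
Proof.
move=> dxy; have [Z Z0] := exists_zero_object.
have [c [_ ->]] := e_ET3 dxy (real_id_zero B Z0) (erefl (comp (idm B) x)).
by rewrite pull0.
Qed.

Lemma pull_deflation0 (A B C : X) (d : E C A) (x : Hom A B) (y : Hom B C) :
  real d x y -> pull y d = 0.
Proof.
move=> dxy; have [Z Z0] := exists_zero_object.
have [a [_ <-]] := e_ET3op (real_zero_id B Z0) dxy (erefl (comp y (idm B))).
by rewrite push0.
Qed.

Lemma inflation_factor (A B C A' : X) (d : E C A) (x : Hom A B) (y : Hom B C)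
    (a : Hom A A') :
  real d x y -> push a d = 0 -> exists a' : Hom B A', a = comp a' x.
Proof.
move=> dxy ad0; have [S [i1 [i2 [p1 [p2 bS]]]]] := exists_biproduct A' C.
have ad : push a d = pull (idm C) (0 : E C A') by rewrite pull0.
have [b [bx _]] := e_lifts dxy (e_zero bS) ad.
exists (comp p1 b); case: bS => p1i1 _ _ _ _.
by rewrite -comp_assoc bx comp_assoc p1i1 comp_idl.
Qed.

Lemma deflation_factor (A B C C' : X) (d : E C A) (x : Hom A B) (y : Hom B C)
    (c : Hom C' C) :
  real d x y -> pull c d = 0 -> exists c' : Hom C' B, c = comp y c'.
Proof.
move=> dxy cd0; have [S [i1 [i2 [p1 [p2 bS]]]]] := exists_biproduct A C'.
have cd : push (idm A) (0 : E C' A) = pull c d by rewrite push0.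
have [b [_ yb]] := e_lifts (e_zero bS) dxy cd.
exists (comp b i2); case: bS => _ p2i2 _ _ _.
by rewrite comp_assoc -yb -comp_assoc p2i2 comp_idr.
Qed.

Lemma ext_pull_of_push0 (A B C Y : X) (d : E C A) (x : Hom A B) (y : Hom B C)
    (eps : E Y A) :
  real d x y -> push x eps = 0 -> exists c : Hom Y C, eps = pull c d.
Proof.
move=> dxy xeps0; have [M [u [v euv]]] := exists_real eps.
have [a' xa'] := inflation_factor euv xeps0.
have a'u : comp a' u = comp x (idm A) by rewrite comp_idr xa'.
have [c [_ cd]] := e_ET3 euv dxy a'u.
by exists c; rewrite -cd push_id.
Qed.

Lemma ext_push_of_pull0 (A B C A' : X) (d : E C A) (x : Hom A B) (y : Hom B C)
    (eps : E C A') :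
  real d x y -> pull y eps = 0 -> exists a : Hom A A', eps = push a d.
Proof.
move=> dxy yeps0; have [M [u [v euv]]] := exists_real eps.
have [c' vc'] := deflation_factor euv yeps0.
have yc' : comp (idm C) y = comp v c' by rewrite comp_idl vc'.
have [a [_ ad]] := e_ET3op dxy euv yc'.
by exists a; rewrite ad pull_id.
Qed.

Lemma split_deflation (A B C : X) (x : Hom A B) (y : Hom B C) :
  real (0 : E C A) x y -> exists s : Hom C B, comp y s = idm C.
Proof.
move=> xy; have [c' yc'] := deflation_factor xy (pull0 _ (idm C)).
by exists c'; rewrite -yc'.
Qed.

(* The octahedral axiom (ET4) turns [y_* xi = 0] into a split E-triangle. *)
Lemma ext_push_of_push_deflation0 (A B C W : X) (d : E C A) (x : Hom A B)
    (y : Hom B C) (xi : E W B) :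
  real d x y -> push y xi = 0 -> exists xi0 : E W A, xi = push x xi0.
Proof.
move=> dxy yxi0; have [M [m [n xmn]]] := exists_real xi.
have [E0 [h' [dd [e [d'' [_ [_ [_ [split_tri [_ xd'']]]]]]]]]] := e_ET4 dxy xmn.
rewrite yxi0 in split_tri; have [s es] := split_deflation split_tri.
by exists (pull s d''); rewrite push_pull xd'' -pull_comp es pull_id.
Qed.

End ExtriangulatedFacts.

Section Perpendiculars.
Variable X : ExtriCat.
Local Notation E := (Ext (eE X)).
Local Notation real := (@ereal X).
Implicit Types M N I K : Mor X.

Lemma ideal_compl I (A B C : X) (u : Hom B C) (f : Hom A B) :
  is_ideal I -> I A B f -> I A C (comp u f).
Proof. by case=> _ _ IM If; rewrite -(comp_idr f); apply: IM. Qed.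

Lemma ideal_compr I (A B C : X) (f : Hom B C) (v : Hom A B) :
  is_ideal I -> I B C f -> I A C (comp f v).
Proof. by case=> _ _ IM If; rewrite -(comp_idl (comp f v)); apply: IM. Qed.

Lemma perp_right_ideal M : is_ideal (perp_right M).
Proof.
split.
- by move=> A B Z C m _ d; rewrite push0m pull0.
- by move=> A B f g fM gM Z C m mM d; rewrite push_addm pull_add fM // gM // addr0.
- move=> A B C D u f v fM Z C' m mM d.
  by rewrite !push_comp -push_pull fM // push0.
Qed.

Lemma perp_left_ideal M : is_ideal (perp_left M).
Proof.
split.
- by move=> A B Y Z m _ d; rewrite pull0m.
- by move=> A B f g fM gM Y Z m mM d; rewrite pull_addm fM // gM // addr0.
- move=> A B C D u f v fM Y Z m mM d.
  by rewrite !pull_comp -push_pull fM // pull0.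
Qed.

Lemma perp_right_antitone M N : mor_sub M N -> mor_sub (perp_right N) (perp_right M).
Proof. by move=> MN A Y g gN Z C m /MN; apply: gN. Qed.

Lemma sub_perp_right_perp_left M : mor_sub M (perp_right (perp_left M)).
Proof. by move=> A Y m mM Z C g gM; apply: gM. Qed.

Lemma sub_perp_left_perp_right M : mor_sub M (perp_left (perp_right M)).
Proof. by move=> Z C g gM A Y m mM; apply: mM. Qed.

Lemma cotorsion_pair_perp M : cotorsion_pair (perp_left M) (perp_right (perp_left M)).
Proof.
split; [exact: perp_left_ideal | exact: perp_right_ideal | move=> Z C g | by []].
split; first exact: sub_perp_left_perp_right.
by move=> gM A Y m /sub_perp_right_perp_left; apply: gM.
Qed.

Lemma perp_right_eq_inj_star M : mor_eq (perp_right M) (inj (star M)).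
Proof.
move=> A Y g; split.
- by move=> gM C _ [C0 [i [d [iM ->]]]]; rewrite push_pull gM.
- by move=> g_inj Z C m mM d; rewrite -push_pull; apply: g_inj; exists C, m, d.
Qed.

Lemma perp_right_propC M : property_C (perp_right M).
Proof.
move=> A B I Y Z W x y g0 x' y' d f g h xy _ [gx _] I_inj fM Z' C m mM xi.
have [xi0 ->] := ext_push_of_push_deflation0 xy (I_inj _ (push y xi)).
by rewrite -push_comp gx push_comp -push_pull fM // push0.
Qed.

Lemma star_sub M N : mor_sub M N -> subF_sub (star M) (star N).
Proof. by move=> MN C A _ [C0 [i [d [/MN iN ->]]]]; exists C0, i, d. Qed.

Lemma star_additive I : is_ideal I -> additive_subfunctor (star I).
Proof.
move=> Iideal; have [I0 ID _] := Iideal; split.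
- by move=> C A; exists C, 0, 0; rewrite pull0.
- move=> C A _ _ [C1 [i1 [d1 [i1I ->]]]] [C2 [i2 [d2 [i2I ->]]]].
  have [S [j1 [j2 [q1 [q2 [q1j1 q2j2 q2j1 q1j2 _]]]]]] := exists_biproduct C1 C2.
  exists S, (comp j1 i1 + comp j2 i2), (pull q1 d1 + pull q2 d2); split.
    by apply: ID; apply: ideal_compl.
  rewrite pull_addm !pull_add -!pull_comp !comp_assoc.
  by rewrite q1j1 q2j2 q2j1 q1j2 !comp0l !comp_idl !pull0m addr0 add0r.
- by move=> C A _ [C0 [i [d [iI ->]]]]; exists C0, i, (- d); rewrite pullN.
- move=> C A A' a _ [C0 [i [d [iI ->]]]].
  by exists C0, i, (push a d); rewrite push_pull.
- move=> C' C A c _ [C0 [i [d [iI ->]]]].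
  by exists C0, (comp i c), d; rewrite pull_comp; split => //; apply: ideal_compr.
Qed.

Lemma propC_inflation K (A B I Y : X) (d : E I A) (x : Hom A B) (y : Hom B I)
    (g : Hom B Y) :
  property_C K -> real d x y -> injective_object X I ->
  K A Y (comp g x) -> K B Y g.
Proof.
move=> KC dxy I_inj; have [Z Z0] := exists_zero_object X.
apply: (KC _ _ _ _ _ _ _ _ _ _ _ _ _ _ 0 dxy (real_id_zero Y Z0)) => //.
split; first by rewrite comp_idl.
by rewrite !comp0l push_comp (push_inflation0 dxy) push0 pull0.
Qed.

Lemma propC_injective K (I Y : X) (r : Hom I Y) :
  is_ideal K -> property_C K -> injective_object X I -> K I Y r.
Proof.
move=> [K0 _ _] KC I_inj; have [Z Z0] := exists_zero_object X.
by apply: (propC_inflation KC (real_zero_id I Z0) I_inj); rewrite comp0r.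
Qed.

End Perpendiculars.

Section Phantoms.
Variables (X : ExtriCat) (F : SubF X).
Local Notation E := (Ext (eE X)).
Local Notation real := (@ereal X).

Lemma Ph_compl (Y C C' : X) (c : Hom C C') (psi : Hom Y C) :
  Ph F Y C psi -> Ph F Y C' (comp c psi).
Proof. by move=> psiF A d; rewrite pull_comp. Qed.

Lemma Ph_ideal : additive_subfunctor F -> is_ideal (Ph F).
Proof.
case=> F0 FD _ _ Fpull; split.
- by move=> Y C A d; rewrite pull0m.
- by move=> Y C f g fF gF A d; rewrite pull_addm; apply: FD.
- by move=> A B C D u f v fF A' d; rewrite !pull_comp; apply: Fpull.
Qed.

Lemma Ph_sub F' : subF_sub F' F -> mor_sub (Ph F') (Ph F).
Proof. by move=> F'F Y C phi phiF' A d; apply: F'F. Qed.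

Lemma star_Ph_sub : subF_sub (star (Ph F)) F.
Proof. by move=> C A _ [C0 [i [d [iF ->]]]]. Qed.

Lemma inj_sub_perp_Ph : mor_sub (inj F) (perp_right (Ph F)).
Proof. by move=> A Y m m_inj Z C psi psiF d; rewrite -push_pull m_inj. Qed.

Lemma Ph_sub_perp_inj : mor_sub (Ph F) (perp_left (inj F)).
Proof. by move=> Y C phi phiF A Y' m m_inj d; rewrite -push_pull m_inj. Qed.

Lemma perp_inj_sub_Ph :
  additive_subfunctor F -> enough_inj_mor F -> mor_sub (perp_left (inj F)) (Ph F).
Proof.
case=> _ _ _ _ Fpull F_inj Z C m m_perp A d.
have [B [C' [e [y [del [edel delF e_inj]]]]]] := F_inj A.
have md0 : push e (pull m d) = 0 by rewrite push_pull m_perp.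
have [c ->] := ext_pull_of_push0 edel md0.
exact: Fpull.
Qed.

Lemma enough_special_inj_sub_star_Ph :
  additive_subfunctor F -> enough_special_inj_mor F -> subF_sub F (star (Ph F)).
Proof.
move=> /Ph_ideal Ph_idl F_spec C A del delF.
have [B [C1 [e [y [d1 [ed1 _ e_inj]]]]]] := F_spec A.
case=> [B' [C' [x' [y' [d' [b [phi [_ [_ [_ d1d']] phiF]]]]]]]].
have [c ->] := ext_pull_of_push0 ed1 (e_inj _ _ delF).
exists C', (comp phi c), d'.
by rewrite pull_comp -d1d' push_id; split => //; exact: ideal_compr Ph_idl phiF.
Qed.

Lemma Ph_factor_through (J K B M Y : X) (gP : E J K) (eK : Hom K B) (u : Hom B M)
    (phi : Hom M J) (psi : Hom Y J) :
  inj F K B eK -> real (push eK gP) u phi -> Ph F Y J psi ->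
  exists c : Hom Y M, psi = comp phi c.
Proof.
move=> eK_inj ephi psiF; apply: (deflation_factor ephi).
by rewrite -push_pull eK_inj.
Qed.

Hypothesis F_add : additive_subfunctor F.
Hypothesis F_inj : enough_inj_mor F.
Hypothesis X_inj : enough_injective_objects X.
Hypothesis X_proj : enough_projective_morphisms X.

Lemma Ph_precover (J : X) : exists (K P B M : X) (xk : Hom K P) (p : Hom P J)
    (gP : E J K) (eK : Hom K B) (u : Hom B M) (phi : Hom M J),
  [/\ real gP xk p, inj F K B eK, real (push eK gP) u phi & Ph F M J phi].
Proof.
have [K [P [xk [p [gP [gP_real p_proj]]]]]] := X_proj J.
have [B [C [e [y [del [edel delF e_inj]]]]]] := F_inj K.
have [M [u [phi ephi]]] := exists_real (push e gP).
exists K, P, B, M, xk, p, gP, e, u, phi; split => // A d.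
case: F_add => _ _ _ Fpush Fpull.
have [g ->] := ext_push_of_pull0 gP_real (p_proj A d).
rewrite -push_pull; apply: Fpush.
have phigP0 : push e (pull phi gP) = 0 by rewrite push_pull (pull_deflation0 ephi).
have [c ->] := ext_pull_of_push0 edel phigP0.
exact: Fpull.
Qed.

Lemma perp_Ph_preenvelope (A : X) : exists (I J M B : X) (x : Hom A I) (q : Hom I J)
    (gam : E J A) (phi : Hom M J) (e : Hom A B) (y : Hom B M) (b : Hom B I),
  [/\ real gam x q, Ph F M J phi, real (pull phi gam) e y,
      tri_mor (pull phi gam) e y gam x q (idm A) b phi
    & perp_right (Ph F) A B e].
Proof.
have [I [J [x [q [gam [gam_real I_inj]]]]]] := X_inj A.
have [K [P [B' [M [xk [p [gP [eK [u [phi [_ eK_inj ephi phiF]]]]]]]]]]] :=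
  Ph_precover J.
have [B [e [y ey]]] := exists_real (pull phi gam).
have [b [be phiy]] := e_lifts ey gam_real (push_id (pull phi gam)).
exists I, J, M, B, x, q, gam, phi, e, y, b; split => //.
  by split; rewrite ?push_id.
move=> Z C m mF d.
have [c0 ->] := ext_pull_of_push0 gam_real (I_inj _ (push x d)).
have [c' c0m] := Ph_factor_through eK_inj ephi (Ph_compl c0 mF).
by rewrite push_pull -pull_comp c0m pull_comp -push_pull (push_inflation0 ey) pull0.
Qed.

Lemma perp_inj_special_precovering : special_precovering (perp_left (inj F)).
Proof.
move=> C.
have [K [P [B [M [xk [p [gP [eK [u [phi [gP_real eK_inj ephi phiF]]]]]]]]]]] :=
  Ph_precover C.
exists M, phi; split; first exact: Ph_sub_perp_inj.
have [b [bxk pb]] := e_lifts gP_real ephi (esym (pull_id (push eK gP))).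
exists K, P, B, xk, p, gP, u, (push eK gP), eK, b; split => //.
  by split; rewrite ?pull_id.
exact: sub_perp_right_perp_left.
Qed.

Lemma perp_perp_inj_special_preenveloping :
  special_preenveloping (perp_right (perp_left (inj F))).
Proof.
move=> A.
have [I [J [M [B [x [q [gam [phi [e [y [b [gam_real phiF ey tri e_perp]]]]]]]]]]]] :=
  perp_Ph_preenvelope A.
exists B, e; split; first exact: (perp_right_antitone (perp_inj_sub_Ph F_add F_inj)).
exists M, I, J, y, (pull phi gam), x, q, gam, b, phi; split => //.
exact/sub_perp_left_perp_right/Ph_sub_perp_inj.
Qed.

Lemma star_Ph_special : enough_special_inj_mor (star (Ph F)).
Proof.
move=> A.
have [I [J [M [B [x [q [gam [phi [e [y [b [gam_real phiF ey tri e_perp]]]]]]]]]]]] :=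
  perp_Ph_preenvelope A.
exists B, M, e, y, (pull phi gam); split => //.
- by exists J, phi, gam.
- exact/perp_right_eq_inj_star.
- exists I, J, x, q, gam, b, phi; split => // A' d.
  by exists J, phi, d.
Qed.

Lemma perp_Ph_minimal (K : Mor X) :
  is_ideal K -> mor_sub (inj F) K -> property_C K -> mor_sub (perp_right (Ph F)) K.
Proof.
move=> Kideal injK KC A Y g g_perp.
have [I [J [x [q [gam [gam_real I_inj]]]]]] := X_inj A.
have [K1 [P [B [M [xk [p [gP [eK [u [phi [_ eK_inj ephi phiF]]]]]]]]]]] :=
  Ph_precover J.
have [t g_gam] : exists t : Hom B Y, push g gam = push t (push eK gP).
  exact: ext_push_of_pull0 ephi (g_perp _ _ _ phiF gam).
have [M' [m [e m_real]]] := exists_real (pull q gP).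
have [s s_gam] : exists s : Hom A M', push m gP = push s gam.
  by apply: ext_push_of_pull0 gam_real _; rewrite -push_pull (push_inflation0 m_real).
have [g2 tK] : exists g2 : Hom M' Y, comp t eK = comp g2 m.
  apply: inflation_factor m_real _.
  by rewrite push_pull push_comp -g_gam -push_pull (pull_deflation0 gam_real) push0.
have g2K : K M' Y g2.
  apply: propC_inflation KC m_real I_inj _.
  by rewrite -tK; apply: ideal_compl Kideal (injK _ _ _ eK_inj).
have [r gs] : exists r : Hom I Y, g - comp g2 s = comp r x.
  apply: inflation_factor gam_real _.
  by rewrite push_addm pushNm !push_comp -s_gam -push_comp -tK push_comp -g_gam subrr.
rewrite -(subrK (comp g2 s) g) gs; case: (Kideal) => _ KD _; apply: KD.
- exact: ideal_compr Kideal (propC_injective _ Kideal KC I_inj).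
- exact: ideal_compr Kideal g2K.
Qed.

End Phantoms.

Theorem theorem4p6 (X : ExtriCat) (F : SubF X) :
  enough_injective_objects X ->
  enough_projective_morphisms X ->
  additive_subfunctor F ->
  enough_inj_mor F ->
  (* (1) *)
  complete_cotorsion_pair (perp_left (inj F)) (perp_right (perp_left (inj F))) /\
  (* (2) *)
  (mor_eq (perp_right (Ph F)) (inj (star (Ph F))) /\
   is_ideal (perp_right (Ph F)) /\
   mor_sub (inj F) (perp_right (Ph F)) /\
   property_C (perp_right (Ph F)) /\
   (forall K : Mor X, is_ideal K -> mor_sub (inj F) K -> property_C K ->
      mor_sub (perp_right (Ph F)) K)) /\
  (* (3) *)
  (additive_subfunctor (star (Ph F)) /\
   subF_sub (star (Ph F)) F /\
   enough_special_inj_mor (star (Ph F)) /\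
   (forall F' : SubF X, additive_subfunctor F' -> subF_sub F' F ->
      enough_special_inj_mor F' -> subF_sub F' (star (Ph F)))).
Proof.
move=> X_inj X_proj F_add F_inj.
split; [|split].
- split; first exact: cotorsion_pair_perp.
    exact: perp_inj_special_precovering.
  exact: perp_perp_inj_special_preenveloping.
- split; first exact: perp_right_eq_inj_star.
  split; first exact: perp_right_ideal.
  split; first exact: inj_sub_perp_Ph.
  split; first exact: perp_right_propC.
  exact: perp_Ph_minimal.
- split; first exact/star_additive/Ph_ideal.
  split; first exact: star_Ph_sub.
  split; first exact: star_Ph_special.
  move=> F' F'_add F'F F'_spec C A d /(enough_special_inj_sub_star_Ph F'_add F'_spec).
  exact: (star_sub (Ph_sub F'F) (d := d)).
Qed.
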